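(* Let $t_j^i=\binom{i}{j}$ for $0\le j\le i$ (Pascal's triangle), and let $b_n=\sum_{i=0}^{n}\sum_{j=0}^{i}\binom{n}{j,\,n-i,\,i-j}t_j^i$ be its tetrahedron coefficient transform. Then for all $n\ge 0$, $$b_n=\sum_{\ell=0}^{n}\binom{n}{\ell}\binom{2\ell}{\ell},$$ i.e., $(b_n)$ is the binomial transform of the central binomial coefficients.
   Context: For non-negative integers $p,q,r$ with $p+q+r=n$, $\binom{n}{p,q,r}=\frac{n!}{p!\,q!\,r!}$ denotes the tetrahedron trinomial coefficient. The binomial transform of a sequence $(a_\ell)$ is the sequence $\sum_{\ell=0}^n\binom{n}{\ell}a_\ell$. *)

From mathcomp Require Import all_boot.
Set Implicit Arguments. Unset Strict Implicit. Unset Printing Implicit Defensive.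

Definition trinom (n p q r : nat) : nat := n`! %/ (p`! * q`! * r`!).

Definition pascal (i j : nat) : nat := 'C(i, j).

Definition tetra_transform (t : nat -> nat -> nat) (n : nat) : nat :=
  \sum_(0 <= i < n.+1) \sum_(0 <= j < i.+1) trinom n j (n - i) (i - j) * t i j.

From mathcomp Require Import all_boot.

(* The trinomial coefficient n!/(j! (n-i)! (i-j)!) factors as C(n,i) C(i,j),
   so the transform of any triangle t is the binomial transform of the row
   sums \sum_j C(i,j) t_j^i; for Pascal's triangle these row sums are
   \sum_j C(i,j)^2 = C(2i,i) by Vandermonde's identity. *)

Lemma trinom_bin n i j : j <= i <= n ->
  trinom n j (n - i) (i - j) = 'C(n, i) * 'C(i, j).
Proof.
case/andP=> le_ji le_in; rewrite /trinom.
have fact_nE : n`! = 'C(n, i) * 'C(i, j) * (j`! * (n - i)`! * (i - j)`!).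
  rewrite -(bin_fact le_in) -(bin_fact le_ji).
  by rewrite -!mulnA; do 3 congr (_ * _); rewrite mulnC.
by rewrite fact_nE mulnK // !muln_gt0 !fact_gt0.
Qed.

Lemma tetra_transformE (t : nat -> nat -> nat) n :
  tetra_transform t n =
  \sum_(0 <= i < n.+1) 'C(n, i) * \sum_(0 <= j < i.+1) 'C(i, j) * t i j.
Proof.
rewrite /tetra_transform !big_nat; apply: eq_bigr => i /andP[_ lt_in].
rewrite big_distrr /= !big_nat; apply: eq_bigr => j /andP[_ lt_ji].
by rewrite trinom_bin ?mulnA // -ltnS lt_ji.
Qed.

Lemma sum_bin_sqr i : \sum_(0 <= j < i.+1) 'C(i, j) * 'C(i, j) = 'C(2 * i, i).
Proof.
rewrite mul2n -addnn -Vandermonde big_mkord.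
by apply: eq_bigr => j _; rewrite bin_sub // -ltnS.
Qed.

Theorem theorem10 (n : nat) :
  tetra_transform pascal n = \sum_(0 <= l < n.+1) 'C(n, l) * 'C(2 * l, l).
Proof.
rewrite tetra_transformE; apply: eq_bigr => i _.
by rewrite sum_bin_sqr.
Qed.
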